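(* Fix $h\in[H]$ and $(x_h,a_h)\in\mathcal A(\mathcal X_h)$. Let $(\gamma^t_h(x_h,a_h))_{t\in[T]}$ be positive random variables with $\gamma^t_h(x_h,a_h)$ being $\mathcal F_{t-1}$-measurable, let $\tau$ be a stopping time with respect to $(\mathcal F_t)$ with values in $\{0,\dots,T\}$, and let $\gamma'>0$ be a deterministic constant such that $\gamma^t_h(x_h,a_h)\ge\gamma'$ for all $t\le\tau$. Define $\tilde\ell^t_h(x_h,a_h)=\mathbb 1\{x^t_h=x_h,a^t_h=a_h\}(1-r^t_h)/(\mu^t_{1:h}(x_h,a_h)+\gamma^t_h(x_h,a_h))$, $\tilde L^t_h=\sum_{k\le t}\tilde\ell^k_h$ and $L^t_h(x_h,a_h)=\sum_{k\le t}\ell^{\nu^k}_h(x_h,a_h)$. Then for any $\delta'\in(0,1)$, with probability at least $1-\delta'$, $$\tilde L^\tau_h(x_h,a_h)-L^\tau_h(x_h,a_h)\le\frac{\log(1/\delta')}{2\gamma'}.$$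
   Context: Setting: an episodic imperfect-information game with horizon $H$ and perfect recall for the max-player, whose information sets are $\mathcal X=\bigsqcup_h\mathcal X_h$ with action sets $\mathcal A(x)$; $\mathcal A(\mathcal X_h)=\{(x_h,a_h):x_h\in\mathcal X_h,a_h\in\mathcal A(x_h)\}$. For a max-player policy $\mu$, $\mu_{1:h}(x_h,a_h)=\prod_{h'\le h}\mu_{h'}(a_{h'}|x_{h'})$ along the unique history of $(x_h,a_h)$. For a min-player policy $\nu$, $\ell^\nu_h(x_h,a_h)=p^\nu_{1:h}(x_h)(1-r^\nu_h(x_h,a_h))$, where $p^\nu_{1:h}(x_h)$ is the induced reach probability of $x_h$ (for the actions in its history) and $r^\nu_h\in[0,1]$ the expected reward. Over $T$ episodes, the max-player's policy $\mu^t$ and opponent's policy $\nu^t$ are $\mathcal F_{t-1}$-measurable, where $\mathcal F_0$ is trivial and $\mathcal F_t$ is generated by $\nu^1,\dots,\nu^{t+1}$ and all observations (information sets $x^k_h$, actions $a^k_h$, rewards $r^k_h\in[0,1]$) of episodes $k\le t$; conditionally on $\mathcal F_{t-1}$, $\mathbb E[\mathbb 1\{x^t_h=x_h,a^t_h=a_h\}(1-r^t_h)\mid\mathcal F_{t-1}]=\mu^t_{1:h}(x_h,a_h)\ell^{\nu^t}_h(x_h,a_h)$. *)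

From HB Require Import structures.
From mathcomp Require Import all_boot all_order all_algebra.
From mathcomp Require Import all_classical all_reals all_analysis.
Set Implicit Arguments. Unset Strict Implicit. Unset Printing Implicit Defensive.
Import Order.TTheory GRing.Theory Num.Theory.
Local Open Scope classical_set_scope.
Local Open Scope ring_scope.

Section Defs.
Context {R : realType} {d : measure_display} {Omega : measurableType d}.

Definition Fmeas (G : set (set Omega)) (X : Omega -> R) : Prop :=
  forall B : set R, measurable B -> G (X @^-1` B).

Definition filtration (F : nat -> set (set Omega)) : Prop :=
  [/\ forall t, sigma_algebra setT (F t),
      forall t, F t `<=` measurable &
      forall s t, (s <= t)%N -> F s `<=` F t].

Definition stopping_time (F : nat -> set (set Omega)) (tau : Omega -> nat) : Prop :=
  forall t, F t [set w | (tau w <= t)%N].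

Definition is_cond_exp (P : probability Omega R) (G : set (set Omega))
  (X Y : Omega -> R) : Prop :=
  Fmeas G Y /\
  forall A, G A -> (\int[P]_(w in A) (X w)%:E = \int[P]_(w in A) (Y w)%:E)%E.

Definition ltilde (hit : nat -> set Omega) (r mu gamma : nat -> Omega -> R)
  (t : nat) (w : Omega) : R :=
  \1_(hit t) w * (1 - r t w) / (mu t w + gamma t w).

Definition Ltilde (hit : nat -> set Omega) (r mu gamma : nat -> Omega -> R)
  (t : nat) (w : Omega) : R :=
  \sum_(1 <= k < t.+1) ltilde hit r mu gamma k w.

Definition Lcum (ell : nat -> Omega -> R) (t : nat) (w : Omega) : R :=
  \sum_(1 <= k < t.+1) ell k w.

End Defs.

From HB Require Import structures.
From mathcomp Require Import all_boot all_order all_algebra.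
From mathcomp Require Import all_classical all_reals all_analysis.
From mathcomp Require Import measurable_realfun.
From mathcomp Require Import ring lra zify.
Set Implicit Arguments. Unset Strict Implicit. Unset Printing Implicit Defensive.
Import Order.TTheory GRing.Theory Num.Theory.
Import numFieldNormedType.Exports.
Local Open Scope classical_set_scope.
Local Open Scope ring_scope.

(* Put lam = 2 gamma' and X_t = 1{hit t} (1 - r_t).  The process
   Z_t = exp (lam * sum_(k <= t, k <= tau) (ltilde_k - ell_k)) is a supermartingale:
   on [k <= tau] we have gamma_k >= gamma', so by convexity of exp the factor
   exp (lam X_k / (mu_k + gamma_k)) lies below the chord 1 + X_k c_k with
   c_k = exp (lam / (mu_k + gamma')) - 1, which is F_(k-1)-measurable; since X_k has
   conditional mean mu_k ell_k, the chord has conditional mean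
   1 + mu_k ell_k c_k <= 1 + lam ell_k <= exp (lam ell_k), because
   mu (exp (2 g / (mu + g)) - 1) <= 2 g is the (1,1) Pade bound on exp.
   Hence E[Z_T] <= 1 and Chernoff's bound at level ln (1/delta') / lam concludes.
   Conditional expectation is only given by its defining identity on F_(k-1)-sets;
   it is extended to nonnegative F_(k-1)-measurable weights by slicing the weight
   into level sets. *)

Section ix_inequalities.
Context {R : realType}.
Implicit Types a g l m v x : R.

Lemma expR_mul_le_chord a x : 0 <= x <= 1 -> expR (x * a) <= 1 + x * (expR a - 1).
Proof.
case/andP=> x0 x1; have := @convex_expR R (Itv01 x0 x1) a 0.
by rewrite !convRE /= expR0 mulr0 addr0 mulr1 /unstable.onem; lra.
Qed.

Lemma pade_expR_le v : 0 <= v -> (1 - v / 2) * expR v <= 1 + v / 2.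
Proof.
move=> v0; pose k (y : R) := 1 + y / 2 - (1 - y / 2) * expR y.
have dk x : is_derive x 1 k ((1 - (1 - x) * expR x) / 2).
  by apply: is_derive_eq; rewrite !scaler0 ?addr0 ?add0r ?mul1r /GRing.scale /= mulr1; field.
suff : k 0 <= k v by rewrite /k mul0r subr0 addr0 expR0 mulr1 subrr subr_ge0.
apply: (@ger0_derive1_ndecry R k 0) => //.
- move=> x _; rewrite derive1E; have [_ ->] := dk x.
  have : (1 - x) * expR x <= 1.
    by have := ler_wpM2r (expR_ge0 x) (expR_ge1Dx (- x)); rewrite -expRD addNr expR0 addrC.
  by move=> h; apply: divr_ge0 => //; lra.
- apply: continuous_subspaceT => x; apply: differentiable_continuous.
  by apply/derivable1_diffP; have [] := dk x.
Qed.

Definition ix_slope m g : R := expR (2 * g / (m + g)) - 1.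

Lemma ix_slope_ge0 m g : 0 <= m -> 0 < g -> 0 <= ix_slope m g.
Proof.
move=> m0 g0; rewrite /ix_slope subr_ge0 -[X in X <= _]expR0 ler_expR.
by apply: divr_ge0; lra.
Qed.

Lemma mul_ix_slope_le m g : 0 <= m -> 0 < g -> m * ix_slope m g <= 2 * g.
Proof.
move=> m0 g0; set v := 2 * g / (m + g).
have v0 : 0 <= v by rewrite /v; apply: divr_ge0; lra.
have hv : (m + g) * (v / 2) * expR v = g * expR v by congr (_ * _); rewrite /v; field; lra.
have := ler_wpM2l (ltW (ltr_pwDr g0 m0)) (pade_expR_le v0).
rewrite /ix_slope -/v; nra.
Qed.

Lemma expR_ix_le x m g (g' : R) : 0 <= x <= 1 -> 0 <= m -> 0 < g -> g <= g' ->
  expR (2 * g * (x / (m + g'))) <= 1 + x * ix_slope m g.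
Proof.
move=> x01 m0 g0 gg'; apply: le_trans (expR_mul_le_chord _ x01); rewrite ler_expR.
have /andP[x0 _] := x01.
have : (m + g')^-1 <= (m + g)^-1 by rewrite lef_pV2 ?posrE; lra.
move=> /(ler_wpM2l (mulr_ge0 (mulr_ge0 (ler0n _ 2) (ltW g0)) x0)); lra.
Qed.

Lemma expR_ix_drift_le1 m l g : 0 <= m -> 0 <= l -> 0 < g ->
  expR (- (2 * g * l)) * (1 + m * l * ix_slope m g) <= 1.
Proof.
move=> m0 l0 g0.
have : 1 + m * l * ix_slope m g <= expR (2 * g * l).
  apply: le_trans (expR_ge1Dx _); rewrite lerD2l mulrAC ler_wpM2r //.
  exact: mul_ix_slope_le.
move=> /(ler_wpM2l (expR_ge0 (- (2 * g * l)))).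
by rewrite -expRD addNr expR0.
Qed.

End ix_inequalities.

Lemma measurable_inv {R : realType} : measurable_fun [set: R] (@GRing.inv R).
Proof.
have nz0 : measurable [set x : R | x != 0] by apply: open_measurable; exact: open_neq.
have mV : measurable_fun [set x : R | x != 0] (@GRing.inv R).
  apply: open_continuous_measurable_fun; first exact: open_neq.
  by move=> y; rewrite inE => y0; exact: inv_continuous.
have m0 : measurable_fun [set 0 : R] (@GRing.inv R) by apply: measurable_fun_set1.
have := proj2 (measurable_funU (@GRing.inv R) nz0 (measurable_set1 0)) (conj mV m0).
congr measurable_fun; apply/seteqP; split => x //= _.
by case: (eqVneq x 0) => [->|]; [right|left].
Qed.

Section sub_sigma_algebra.
Context {R : realType} {d : measure_display} {Omega : measurableType d}.
Variable G : set (set Omega).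

Lemma Fmeas_measurable (f : Omega -> R) :
  G `<=` measurable -> Fmeas G f -> measurable_fun setT f.
Proof. by move=> GM fG _ B mB; rewrite setTI; apply: GM; exact: fG. Qed.

Lemma Fmeas_sub (G' : set (set Omega)) (f : Omega -> R) :
  G `<=` G' -> Fmeas G f -> Fmeas G' f.
Proof. by move=> GG' fG B mB; apply: GG'; exact: fG. Qed.

Hypothesis sigmaG : sigma_algebra setT G.

Lemma g_sigma_measurableE (A : set Omega) :
  measurable (A : set (g_sigma_algebraType G)) = G A.
Proof. by rewrite /measurable /= (sigma_algebra_id sigmaG). Qed.

Lemma FmeasP (f : Omega -> R) :
  Fmeas G f <-> measurable_fun [set: g_sigma_algebraType G] (f : g_sigma_algebraType G -> R).
Proof.
split=> [fG _ B mB | mf B mB]; last by have := mf measurableT B mB; rewrite setTI g_sigma_measurableE.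
by rewrite setTI g_sigma_measurableE; exact: fG.
Qed.

End sub_sigma_algebra.

Section level_sets.
Context {R : realType} {T : Type} (W : T -> R) (e : R).
Hypothesis e_gt0 : 0 < e.

Definition level_set (k : nat) := [set w | k%:R * e <= W w < k.+1%:R * e].

Lemma bigcup_level_set : (forall w, 0 <= W w) -> \bigcup_k level_set k = setT.
Proof.
move=> W0; apply/seteqP; split => // w _.
have /andP[lo hi] := truncn_itv (divr_ge0 (W0 w) (ltW e_gt0)).
exists (Num.truncn (W w / e)) => //=.
by rewrite /level_set /= -(ler_pdivlMr _ _ e_gt0) -(ltr_pdivrMr _ _ e_gt0) lo hi.
Qed.

Lemma trivIset_level_set : trivIset setT level_set.
Proof.
move=> i j _ _ [w [/andP[lo_i hi_i] /andP[lo_j hi_j]]].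
have := le_lt_trans lo_i hi_j; have := le_lt_trans lo_j hi_i.
rewrite !(ltr_pM2r e_gt0) !ltr_nat !ltnS => ji ij.
by apply/eqP; rewrite eqn_leq ij ji.
Qed.

End level_sets.

Section nonnegative_real_integrands.
Local Open Scope ereal_scope.
Context {R : realType} {d : measure_display} {Omega : measurableType d}.
Variable mu : {measure set Omega -> \bar R}.
Implicit Types f g : Omega -> R.

Lemma ge0_le_integral_EFin f g : measurable_fun setT f -> measurable_fun setT g ->
  (forall w, 0 <= f w)%R -> (forall w, f w <= g w)%R ->
  \int[mu]_(w in setT) (f w)%:E <= \int[mu]_(w in setT) (g w)%:E.
Proof.
move=> mf mg f0 fg; apply: ge0_le_integral => //; do ?exact/measurable_EFinP.
- by move=> w _; rewrite lee_fin.
- by move=> w _; rewrite lee_fin.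
Qed.

Lemma ge0_integralD_EFin f g : measurable_fun setT f -> measurable_fun setT g ->
  (forall w, 0 <= f w)%R -> (forall w, 0 <= g w)%R ->
  \int[mu]_(w in setT) ((f w + g w)%R%:E) =
  \int[mu]_(w in setT) (f w)%:E + \int[mu]_(w in setT) (g w)%:E.
Proof.
move=> mf mg f0 g0; under eq_integral do rewrite EFinD.
by rewrite ge0_integralD //; do ?exact/measurable_EFinP; move=> w _; rewrite lee_fin.
Qed.

End nonnegative_real_integrands.

Section integral_against_sub_measurable_weight.
Local Open Scope ereal_scope.
Context {R : realType} {d : measure_display} {Omega : measurableType d}.
Variables (P : probability Omega R) (G : set (set Omega)) (X Y W : Omega -> R).
Hypothesis GM : G `<=` measurable.
Hypotheses (mX : measurable_fun setT X) (mY : measurable_fun setT Y).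
Hypotheses (X_ge0 : forall w, (0 <= X w)%R) (Y01 : forall w, (0 <= Y w <= 1)%R).
Hypothesis integral_XY :
  forall A, G A -> \int[P]_(w in A) (X w)%:E = \int[P]_(w in A) (Y w)%:E.
Hypotheses (WG : Fmeas G W) (W_ge0 : forall w, (0 <= W w)%R).

Let Y_ge0 w : (0 <= Y w)%R. Proof. by case/andP: (Y01 w). Qed.
Let mW : measurable_fun setT W. Proof. exact: Fmeas_measurable GM WG. Qed.

Let measurable_EFin_comp (f : Omega -> R) D :
  measurable_fun setT f -> measurable_fun D (EFin \o f).
Proof. by move=> mf; apply/measurable_EFinP; exact: measurable_funTS. Qed.

Let integralZl (c : R) (f : Omega -> R) D : measurable D -> (0 <= c)%R ->
  (forall w, 0 <= f w)%R -> measurable_fun setT f ->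
  \int[P]_(w in D) ((c * f w)%R%:E) = c%:E * \int[P]_(w in D) (f w)%:E.
Proof.
move=> mD c0 f0 mf; under eq_integral do rewrite EFinM.
by rewrite ge0_integralZl_EFin // => [w _|]; [rewrite lee_fin | exact: measurable_EFin_comp].
Qed.

Let measurable_level_set (e : R) (k : nat) : G (level_set W e k).
Proof.
rewrite (_ : level_set _ _ _ = W @^-1` `[(k%:R * e)%R, (k.+1%:R * e)%R[%classic).
  by apply: WG; exact: measurable_itv.
by apply/seteqP; split => w /=; rewrite in_itv.
Qed.

Lemma le_integral_level_set (e : R) (k : nat) : (0 < e)%R ->
  \int[P]_(w in level_set W e k) ((W w * X w)%R%:E) <=
  \int[P]_(w in level_set W e k) (((W w + e) * Y w)%R%:E).
Proof.
move=> e0; set A := level_set W e k; set c := (k.+1%:R * e)%R.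
have c0 : (0 <= c)%R by rewrite mulr_ge0 // ltW.
have mA := GM (measurable_level_set e k).
have mcZ (f : Omega -> R) : measurable_fun setT f -> measurable_fun setT (fun w => c * f w)%R.
  by move=> mf; apply: measurable_funM => //; exact: measurable_cst.
apply: (@le_trans _ _ (\int[P]_(w in A) ((c * X w)%R%:E))).
  apply: ge0_le_integral => //.
  - by move=> w _; rewrite lee_fin mulr_ge0.
  - exact/measurable_EFin_comp/measurable_funM.
  - exact/measurable_EFin_comp/mcZ.
  - by move=> w /andP[_ /ltW Wc]; rewrite lee_fin ler_wpM2r.
have -> : \int[P]_(w in A) ((c * X w)%R%:E) = \int[P]_(w in A) ((c * Y w)%R%:E).
  by rewrite !integralZl // (integral_XY (measurable_level_set e k)).
apply: ge0_le_integral => //.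
- by move=> w _; rewrite lee_fin mulr_ge0.
- exact/measurable_EFin_comp/mcZ.
- by apply/measurable_EFin_comp/measurable_funM => //; apply: measurable_funD => //; exact: measurable_cst.
- move=> w /andP[kW _]; rewrite lee_fin ler_wpM2r //.
  by rewrite /c -addn1 natrD mulrDl mul1r lerD2r.
Qed.

Lemma le_integral_sub_measurable_weight :
  \int[P]_(w in setT) ((W w * X w)%R%:E) <= \int[P]_(w in setT) ((W w * Y w)%R%:E).
Proof.
apply/lee_addgt0Pr => e e0.
have mWY : measurable_fun setT (fun w => W w * Y w)%R by exact: measurable_funM.
have meY : measurable_fun setT (fun w => e * Y w)%R.
  by apply: measurable_funM => //; exact: measurable_cst.
apply: (@le_trans _ _ (\int[P]_(w in setT) (((W w + e) * Y w)%R)%:E)).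
  rewrite -(bigcup_level_set e0 W_ge0).
  have mlev k : measurable (level_set W e k) := GM (measurable_level_set e k).
  have triv := trivIset_level_set (W := W) e0.
  rewrite !ge0_integral_bigcup //.
  - apply: lee_nneseries => [k _ _|k _]; last exact: le_integral_level_set.
    by apply: integral_ge0 => w _; rewrite lee_fin mulr_ge0.
  - by apply: measurable_EFin_comp; under eq_fun do rewrite mulrDl; exact: measurable_funD.
  - by move=> w _; rewrite lee_fin mulr_ge0 // addr_ge0 // ltW.
  - exact/measurable_EFin_comp/measurable_funM.
  - by move=> w _; rewrite lee_fin mulr_ge0.
have intY_le1 : \int[P]_(w in setT) (Y w)%:E <= 1.
  apply: (@le_trans _ _ (\int[P]_(w in setT) (cst 1 w))); last first.
    by rewrite integral_cst // mul1e probability_le1.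
  apply: ge0_le_integral => //.
  - by move=> w _; rewrite lee_fin.
  - exact: measurable_EFin_comp.
  - by move=> w _; rewrite lee_fin; case/andP: (Y01 w).
under eq_integral do rewrite mulrDl EFinD.
rewrite ge0_integralD //; do ?exact: measurable_EFin_comp; last 2 first.
- by move=> w _; rewrite lee_fin mulr_ge0.
- by move=> w _; rewrite lee_fin mulr_ge0 // ltW.
rewrite leeD2l // integralZl //; last exact: ltW.
by rewrite -[leRHS]mule1 lee_wpmul2l // lee_fin ltW.
Qed.

End integral_against_sub_measurable_weight.

Lemma exp_moment_deviation {R : realType} {d : measure_display} {Omega : measurableType d}
    (P : probability Omega R) (S : Omega -> R) (lam delta : R) :
  measurable_fun setT S -> 0 < lam -> 0 < delta ->
  (\int[P]_(w in setT) (expR (lam * S w))%:E <= 1)%E ->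
  ((1 - delta)%:E <= P [set w | (S w <= ln delta^-1 / lam)%R])%E.
Proof.
move=> mS lam0 delta0 mgf_le1; set c := ln delta^-1 / lam.
have mX : S \in mfun by rewrite inE.
have := @chernoff _ _ _ P (mfun_Sub mX) lam c lam0.
rewrite mfun_valP => tail_le.
have tail_le_delta : (P [set w | (c <= S w)%R] <= delta%:E)%E.
  move: tail_le; have -> : expR (- (lam * c)) = delta.
    by rewrite /c mulrC divfK ?gt_eqF // lnV ?posrE // opprK lnK ?posrE.
  have mgf_le : ('M_P S lam <= 1)%E by rewrite /mmt_gen_fun unlock -mul_funC; exact: mgf_le1.
  move/le_trans; apply; rewrite -[leRHS]mul1e.
  by apply: (lee_wpmul2r _ mgf_le); rewrite lee_fin ltW.
have mlevel (A : set R) : measurable A -> measurable (S @^-1` A).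
  by move=> mA; rewrite -[X in measurable X]setTI; exact: mS.
have mtail : measurable [set w | (c <= S w)%R].
  suff -> : [set w | (c <= S w)%R] = S @^-1` `[c, +oo[ by exact: mlevel (measurable_itv _).
  by apply/seteqP; split => w /=; rewrite in_itv /= andbT.
apply: (@le_trans _ _ (P (~` [set w | (c <= S w)%R]))).
  by rewrite probability_setC // EFinB; exact: leeB.
apply: le_measure; rewrite ?inE; [exact: measurableC | | by move=> w /= /negP; rewrite -ltNge => /ltW].
suff -> : [set w | (S w <= c)%R] = S @^-1` `]-oo, c] by exact: mlevel (measurable_itv _).
by apply/seteqP; split => w /=; rewrite in_itv.
Qed.

Section stopped_ix_supermartingale.
Context {R : realType} {d : measure_display} {Omega : measurableType d}.
Context {P : probability Omega R} {F : nat -> set (set Omega)} {T : nat}.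
Context {hit : nat -> set Omega} {r mu ell gamma : nat -> Omega -> R}.
Context {tau : Omega -> nat} {gamma' : R}.
Hypothesis filtF : filtration F.
Hypothesis hit_meas : forall t, (1 <= t <= T)%N -> F t (hit t).
Hypothesis r_meas : forall t, (1 <= t <= T)%N -> Fmeas (F t) (r t).
Hypothesis r01 : forall t w, (1 <= t <= T)%N -> 0 <= r t w <= 1.
Hypothesis mu_meas : forall t, (1 <= t <= T)%N -> Fmeas (F t.-1) (mu t).
Hypothesis mu01 : forall t w, (1 <= t <= T)%N -> 0 <= mu t w <= 1.
Hypothesis ell_meas : forall t, (1 <= t <= T)%N -> Fmeas (F t.-1) (ell t).
Hypothesis ell01 : forall t w, (1 <= t <= T)%N -> 0 <= ell t w <= 1.
Hypothesis loss_cond_exp : forall t, (1 <= t <= T)%N ->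
  is_cond_exp P (F t.-1) (fun w => \1_(hit t) w * (1 - r t w)) (fun w => mu t w * ell t w).
Hypothesis gamma_meas : forall t, (1 <= t <= T)%N -> Fmeas (F t.-1) (gamma t).
Hypothesis tau_stopping : stopping_time F tau.
Hypothesis tau_le_T : forall w, (tau w <= T)%N.
Hypothesis gamma'_gt0 : 0 < gamma'.
Hypothesis gamma'_le : forall t w, (1 <= t)%N -> (t <= tau w)%N -> gamma' <= gamma t w.

Let sigmaF t : sigma_algebra setT (F t). Proof. by case: filtF. Qed.
Let F_measurable t : F t `<=` measurable. Proof. by case: filtF. Qed.
Let F_mono s t : (s <= t)%N -> F s `<=` F t. Proof. by case: filtF => _ _; apply. Qed.

Let gmeasurableF t (f : Omega -> R) :
  Fmeas (F t) f -> measurable_fun [set: g_sigma_algebraType (F t)] f.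
Proof. by move/(FmeasP (sigmaF t)). Qed.

Let Fmeas_pred t (f : Omega -> R) : Fmeas (F t.-1) f -> Fmeas (F t) f.
Proof. by apply: Fmeas_sub; apply: F_mono; exact: leq_pred. Qed.

Let loss t w : R := \1_(hit t) w * (1 - r t w).
Let alive k w : R := \1_[set w | (k <= tau w)%N] w.
Let increment k w : R := alive k w * (ltilde hit r mu gamma k w - ell k w).
Let S t w : R := \sum_(1 <= k < t.+1) increment k w.
Let Z t w : R := expR (2 * gamma' * S t w).

Let aliveE k w : alive k w = if (k <= tau w)%N then 1 else 0.
Proof.
by rewrite /alive indicE; case: ifP => h; [rewrite mem_set | rewrite memNset //= h].
Qed.

Let loss01 t w : (1 <= t <= T)%N -> 0 <= loss t w <= 1.
Proof. by move=> tT; have := r01 w tT; rewrite /loss indicE; case: (_ \in _) => /=; lra. Qed.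

Let Fmeas_alive k : (1 <= k)%N -> Fmeas (F k.-1) (alive k).
Proof.
move=> k1; apply/(FmeasP (sigmaF _))/measurable_indic.
rewrite (g_sigma_measurableE (sigmaF _)); case: (sigmaF k.-1) => _ FC _.
suff -> : [set w | (k <= tau w)%N] = setT `\` [set w | (tau w <= k.-1)%N] by exact/FC/tau_stopping.
by apply/seteqP; split => w /=; [move=> kt; split => //; apply/negP; lia | case=> _ /negP; lia].
Qed.

Let Fmeas_loss t : (1 <= t <= T)%N -> Fmeas (F t) (loss t).
Proof.
move=> tT; apply/(FmeasP (sigmaF _))/measurable_funM.
  by apply: measurable_indic; rewrite (g_sigma_measurableE (sigmaF _)); exact: hit_meas.
by apply: measurable_funB; [exact: measurable_cst | exact: gmeasurableF (r_meas tT)].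
Qed.

Let Fmeas_increment k : (1 <= k <= T)%N -> Fmeas (F k) (increment k).
Proof.
move=> kT; have k1 : (1 <= k)%N by case/andP: kT.
have Fk (f : Omega -> R) : Fmeas (F k.-1) f -> measurable_fun [set: g_sigma_algebraType (F k)] f.
  by move/Fmeas_pred/gmeasurableF.
apply/(FmeasP (sigmaF _))/measurable_funM; first exact: Fk (Fmeas_alive k1).
apply: measurable_funB; last exact: Fk (ell_meas kT).
apply: measurable_funM; first exact: gmeasurableF (Fmeas_loss kT).
apply: measurableT_comp; first exact: measurable_inv.
by apply: measurable_funD; apply: Fk; [exact: mu_meas | exact: gamma_meas].
Qed.

Let S_succ t w : S t.+1 w = S t w + increment t.+1 w.
Proof. by rewrite /S big_nat_recr. Qed.

Let Fmeas_S t : (t <= T)%N -> Fmeas (F t) (S t).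
Proof.
elim: t => [_|t IH tT].
  apply/(FmeasP (sigmaF _)); rewrite (_ : S 0 = cst 0); first exact: measurable_cst.
  by apply/funext => w; rewrite /S big_geq.
rewrite (_ : S t.+1 = fun w => S t w + increment t.+1 w); last by apply/funext => w; rewrite S_succ.
apply/(FmeasP (sigmaF _))/measurable_funD; apply: gmeasurableF.
  by apply: (Fmeas_sub (F_mono (leqnSn t))); apply: IH; lia.
by apply: Fmeas_increment; lia.
Qed.

Let Fmeas_Z t : (t <= T)%N -> Fmeas (F t) (Z t).
Proof.
move=> tT; apply/(FmeasP (sigmaF _)); apply: measurableT_comp; first exact: measurable_expR.
apply: measurable_funM; first exact: measurable_cst.
exact: gmeasurableF (Fmeas_S tT).
Qed.

Let drift t w : R := expR (- (2 * gamma' * ell t.+1 w)).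
Let base t w : R := Z t w * (1 - alive t.+1 w + alive t.+1 w * drift t w).
Let weight t w : R := Z t w * alive t.+1 w * drift t w * ix_slope (mu t.+1 w) gamma'.

Let Z_succ_le t w : (t < T)%N -> Z t.+1 w <= base t w + weight t w * loss t.+1 w.
Proof.
move=> tT; have tT1 : (1 <= t.+1 <= T)%N by lia.
rewrite /base /weight /Z S_succ /increment aliveE; case: ifP => [alive_t|_]; last first.
  by rewrite !(mul0r, mulr0, addr0, subr0, mulr1).
have /andP[m0 _] := mu01 w tT1.
have key : expR (2 * gamma' * ltilde hit r mu gamma t.+1 w) <=
    1 + loss t.+1 w * ix_slope (mu t.+1 w) gamma'.
  exact: expR_ix_le (loss01 w tT1) m0 gamma'_gt0 (gamma'_le (ltn0Sn t) alive_t).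
have ZD0 : 0 <= expR (2 * gamma' * S t w) * drift t w by rewrite mulr_ge0 ?expR_ge0.
have := ler_wpM2l ZD0 key.
have -> : expR (2 * gamma' * (S t w + 1 * (ltilde hit r mu gamma t.+1 w - ell t.+1 w))) =
    expR (2 * gamma' * S t w) * drift t w * expR (2 * gamma' * ltilde hit r mu gamma t.+1 w).
  by rewrite /drift -!expRD; congr expR; ring.
lra.
Qed.

Let drift_le t w : (t < T)%N ->
  base t w + weight t w * (mu t.+1 w * ell t.+1 w) <= Z t w.
Proof.
move=> tT; have tT1 : (1 <= t.+1 <= T)%N by lia.
rewrite /base /weight aliveE; case: ifP => _; last by rewrite !(mul0r, mulr0, addr0, subr0, mulr1).
have /andP[m0 _] := mu01 w tT1; have /andP[l0 _] := ell01 w tT1.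
have := ler_wpM2l (expR_ge0 (2 * gamma' * S t w)) (expR_ix_drift_le1 m0 l0 gamma'_gt0).
rewrite /Z /drift; lra.
Qed.

Let Fmeas_drift t : (t < T)%N -> Fmeas (F t) (drift t).
Proof.
move=> tT; apply/(FmeasP (sigmaF _)); apply: measurableT_comp; first exact: measurable_expR.
apply: measurable_funN; apply: measurable_funM; first exact: measurable_cst.
by apply: gmeasurableF; apply: (ell_meas (t := t.+1)); lia.
Qed.

Let alive01 k w : alive k w = 0 \/ alive k w = 1.
Proof. by rewrite aliveE; case: ifP; [right | left]. Qed.

Let base_ge0 t w : 0 <= base t w.
Proof.
rewrite /base mulr_ge0 ?expR_ge0 //.
by case: (alive01 t.+1 w) => ->; rewrite ?mul0r ?mul1r ?subrr ?subr0 ?addr0 ?add0r ?expR_ge0.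
Qed.

Let weight_ge0 t w : (t < T)%N -> 0 <= weight t w.
Proof.
move=> tT; have /andP[m0 _] : 0 <= mu t.+1 w <= 1 by apply: mu01; lia.
by rewrite /weight !mulr_ge0 ?expR_ge0 ?ix_slope_ge0 //; case: (alive01 t.+1 w) => ->.
Qed.

Let measurableF t (f : Omega -> R) : Fmeas (F t) f -> measurable_fun setT f.
Proof. exact: Fmeas_measurable (@F_measurable t). Qed.

Let Fmeas_base t : (t < T)%N -> Fmeas (F t) (base t).
Proof.
move=> tT; apply/(FmeasP (sigmaF t))/measurable_funM; first exact: gmeasurableF (Fmeas_Z (ltnW tT)).
have Falive := gmeasurableF (Fmeas_alive (ltn0Sn t)).
apply: measurable_funD; first by apply: measurable_funB => //; exact: measurable_cst.
by apply: measurable_funM => //; exact: gmeasurableF (Fmeas_drift tT).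
Qed.

Let Fmeas_weight t : (t < T)%N -> Fmeas (F t) (weight t).
Proof.
move=> tT; have tT1 : (1 <= t.+1 <= T)%N by lia.
apply/(FmeasP (sigmaF t))/measurable_funM.
  apply: measurable_funM; last exact: gmeasurableF (Fmeas_drift tT).
  by apply: measurable_funM; [exact: gmeasurableF (Fmeas_Z (ltnW tT)) | exact: gmeasurableF (Fmeas_alive (ltn0Sn t))].
apply: measurable_funB; last exact: measurable_cst.
apply: measurableT_comp; first exact: measurable_expR.
apply: measurable_funM; first exact: measurable_cst.
apply: measurableT_comp; first exact: measurable_inv.
by apply: measurable_funD; [exact: gmeasurableF (mu_meas tT1) | exact: measurable_cst].
Qed.

Let integral_weight_loss_le t : (t < T)%N ->
  (\int[P]_(w in setT) (weight t w * loss t.+1 w)%:E <=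
   \int[P]_(w in setT) (weight t w * (mu t.+1 w * ell t.+1 w))%:E)%E.
Proof.
move=> tT; have tT1 : (1 <= t.+1 <= T)%N by lia.
have [_ cond] := loss_cond_exp tT1.
have mean01 w : 0 <= mu t.+1 w * ell t.+1 w <= 1.
  by have /andP[? ?] := mu01 w tT1; have /andP[? ?] := ell01 w tT1; apply/andP; split; nra.
apply: le_integral_sub_measurable_weight (@F_measurable t) _ _ _ mean01 cond
  (Fmeas_weight tT) (fun w => weight_ge0 w tT).
- exact: measurableF (Fmeas_loss tT1).
- by apply: measurable_funM; apply: measurableF; [exact: mu_meas tT1 | exact: ell_meas tT1].
- by move=> w; case/andP: (loss01 w tT1).
Qed.

Let integral_Z_succ_le t : (t < T)%N ->
  (\int[P]_(w in setT) (Z t.+1 w)%:E <= \int[P]_(w in setT) (Z t w)%:E)%E.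
Proof.
move=> tT; have tT1 : (1 <= t.+1 <= T)%N by lia.
have mbase := measurableF (Fmeas_base tT); have mweight := measurableF (Fmeas_weight tT).
have mloss := measurableF (Fmeas_loss tT1).
have mmean : measurable_fun setT (fun w => mu t.+1 w * ell t.+1 w).
  by apply: measurable_funM; apply: measurableF; [exact: mu_meas tT1 | exact: ell_meas tT1].
have loss_ge0 w : 0 <= loss t.+1 w by case/andP: (loss01 w tT1).
have mean_ge0 w : 0 <= mu t.+1 w * ell t.+1 w.
  by have /andP[? _] := mu01 w tT1; have /andP[? _] := ell01 w tT1; rewrite mulr_ge0.
have weight_ge0' w := weight_ge0 w tT.
apply: (@le_trans _ _ (\int[P]_(w in setT) ((base t w + weight t w * loss t.+1 w)%:E))%E).
  apply: ge0_le_integral_EFin => [||w|w]; last exact: Z_succ_le.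
  - exact: measurableF (Fmeas_Z tT).
  - by apply: measurable_funD => //; exact: measurable_funM.
  - exact: expR_ge0.
rewrite ge0_integralD_EFin //; [|exact: measurable_funM|by move=> w; rewrite mulr_ge0].
apply: le_trans (leeD2l _ (integral_weight_loss_le tT)) _.
rewrite -ge0_integralD_EFin //; [|exact: measurable_funM|by move=> w; rewrite mulr_ge0].
apply: ge0_le_integral_EFin => [||w|w]; last exact: drift_le.
- by apply: measurable_funD => //; exact: measurable_funM.
- exact: measurableF (Fmeas_Z (ltnW tT)).
- by rewrite addr_ge0 // mulr_ge0.
Qed.

Let integral_Z_le1 t : (t <= T)%N -> (\int[P]_(w in setT) (Z t w)%:E <= 1)%E.
Proof.
elim: t => [_|t IH tT]; last exact: le_trans (integral_Z_succ_le tT) (IH (ltnW tT)).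
rewrite (_ : (fun w => (Z 0 w)%:E) = cst 1%E).
  by rewrite integral_cst // mul1e probability_le1.
by apply/funext => w; rewrite /Z /S big_geq // mulr0 expR0.
Qed.

Let stopped_sumE w : Ltilde hit r mu gamma (tau w) w - Lcum ell (tau w) w = S T w.
Proof.
rewrite /Ltilde /Lcum /S -sumrB (@big_cat_nat _ _ _ (tau w).+1 1 T.+1) //= ?ltnS //.
rewrite [X in _ = _ + X]big_nat_cond [X in _ = _ + X]big1 ?addr0; last first.
  by move=> k /andP[/andP[tk _] _]; rewrite /increment aliveE leqNgt tk mul0r.
by apply: eq_big_nat => k /andP[_ kt]; rewrite /increment aliveE -ltnS kt mul1r.
Qed.

Let measurable_stopped_deviation :
  measurable_fun setT (fun w => Ltilde hit r mu gamma (tau w) w - Lcum ell (tau w) w).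
Proof.
rewrite (_ : (fun w => _) = S T); first exact: measurableF (Fmeas_S (leqnn T)).
by apply/funext => w; rewrite stopped_sumE.
Qed.

Let integral_expR_stopped_deviation_le1 :
  (\int[P]_(w in setT)
     (expR (2 * gamma' * (Ltilde hit r mu gamma (tau w) w - Lcum ell (tau w) w)))%:E <= 1)%E.
Proof.
under eq_integral do rewrite stopped_sumE.
exact: integral_Z_le1.
Qed.

Lemma stopped_ix_deviation (delta : R) : 0 < delta ->
  ((1 - delta)%:E <= P [set w | (Ltilde hit r mu gamma (tau w) w - Lcum ell (tau w) w
                                 <= ln delta^-1 / (2 * gamma'))%R])%E.
Proof.
move=> delta_gt0; have lam_gt0 : 0 < 2 * gamma' by rewrite mulr_gt0.
exact: exp_moment_deviation measurable_stopped_deviation lam_gt0 delta_gt0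
  integral_expR_stopped_deviation_le1.
Qed.

End stopped_ix_supermartingale.

Theorem mainTheorem5 (R : realType) (d : measure_display) (Omega : measurableType d)
  (P : probability Omega R) (F : nat -> set (set Omega)) (T : nat)
  (hit : nat -> set Omega) (r mu ell gamma : nat -> Omega -> R)
  (tau : Omega -> nat) (gamma' delta' : R) :
  filtration F ->
  F 0%N = [set set0; setT] ->
  (forall t, (1 <= t <= T)%N -> F t (hit t)) ->
  (forall t, (1 <= t <= T)%N -> Fmeas (F t) (r t)) ->
  (forall t w, (1 <= t <= T)%N -> 0 <= r t w <= 1) ->
  (forall t, (1 <= t <= T)%N -> Fmeas (F t.-1) (mu t)) ->
  (forall t w, (1 <= t <= T)%N -> 0 <= mu t w <= 1) ->
  (forall t, (1 <= t <= T)%N -> Fmeas (F t.-1) (ell t)) ->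
  (forall t w, (1 <= t <= T)%N -> 0 <= ell t w <= 1) ->
  (forall t, (1 <= t <= T)%N ->
     is_cond_exp P (F t.-1) (fun w => \1_(hit t) w * (1 - r t w))
                            (fun w => mu t w * ell t w)) ->
  (forall t, (1 <= t <= T)%N -> Fmeas (F t.-1) (gamma t)) ->
  (forall t w, (1 <= t <= T)%N -> 0 < gamma t w) ->
  stopping_time F tau ->
  (forall w, (tau w <= T)%N) ->
  0 < gamma' ->
  (forall t w, (1 <= t)%N -> (t <= tau w)%N -> gamma' <= gamma t w) ->
  0 < delta' < 1 ->
  ((1 - delta')%:E <=
   P [set w | (Ltilde hit r mu gamma (tau w) w - Lcum ell (tau w) w
               <= ln (delta'^-1) / (2 * gamma'))%R])%E.
Proof.
move=> filtF _ hitF rF r01 muF mu01 ellF ell01 loss_cond_exp gammaF _ tau_stop tau_le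
  gamma'_gt0 gamma'_le /andP[delta'_gt0 _].
have deviation := stopped_ix_deviation filtF hitF rF r01 muF mu01 ellF ell01 loss_cond_exp
  gammaF tau_stop tau_le gamma'_gt0 gamma'_le delta'_gt0.
exact: deviation.
Qed.
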